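(* For every $n\ge 1$, the number $a_n$ of topologically distinct endstates of Planted Brussels Sprouts whose initial state has $n$ arms is \[a_n=\frac{1}{2n-1}\binom{3n-3}{n-1}.\]
   Context: Planted Brussels Sprouts of order $n$: start with a closed disk with $n$ marked points on its boundary circle, labeled $1,\dots,n$ in clockwise order. Attached to each marked point is an arm, a short segment pointing into the interior of the disk; these arms are free. A move consists of two steps. First, choose two free arms and join their free ends by a simple curve (an arc) in the disk that does not intersect any previously drawn arc or arm; the two joined arms cease to be free. Second, mark a point (a notch) on the arc, from which two new free arms emanate, one on each side of the arc. The game ends when no move is possible, and the final configuration is called an endstate. Long labels: the original arm at point $i$ has long label $i$. If an arc joins arms with long labels $\alpha$ and $\beta$, the two new arms receive long labels $(\alpha,\beta)$ and $(\beta,\alpha)$, placed so that, going clockwise around the notch, one sees the old arm $\alpha$, the new arm $(\alpha,\beta)$, the old arm $\beta$, and the new arm $(\beta,\alpha)$. Two endstates are topologically equivalent (counted once) iff some homeomorphism of the disk carries one to the other preserving long labels; equivalently, iff they have the same set of long labels. *)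

From HB Require Import structures.
From mathcomp Require Import all_boot all_order all_algebra.
From mathcomp Require Import finmap.
Set Implicit Arguments. Unset Strict Implicit. Unset Printing Implicit Defensive.

(* Long labels: original arm i is [Lf i]; the new arm (a,b) is [Nd a b]. *)
Inductive lab : Type := Lf of nat | Nd of lab & lab.

Fixpoint lab_enc (x : lab) : GenTree.tree nat :=
  match x with
  | Lf i => GenTree.Leaf i
  | Nd a b => GenTree.Node 0 [:: lab_enc a; lab_enc b]
  end.

Fixpoint lab_dec (t : GenTree.tree nat) : option lab :=
  match t with
  | GenTree.Leaf i => Some (Lf i)
  | GenTree.Node _ [:: ta; tb] =>
      match lab_dec ta, lab_dec tb with
      | Some a, Some b => Some (Nd a b)
      | _, _ => None
      end
  | _ => None
  end.

Lemma lab_encK : pcancel lab_enc lab_dec.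
Proof. by elim=> [i|a IHa b IHb] //=; rewrite IHa IHb. Qed.

HB.instance Definition _ := Countable.copy lab (pcan_type lab_encK).

(* A game state: the list of regions (faces) of the disk, each given by the
   cyclic sequence of its free arms, read along its boundary in the
   clockwise sense (region on the right); and the list [hist] of all long
   labels of all arms drawn so far (original and new). *)
Record state := State { regions : seq (seq lab); hist : seq lab }.

Definition init_state (n : nat) : state :=
  State [:: [seq Lf i | i <- iota 1 n]] [seq Lf i | i <- iota 1 n].

(* One move: in some region whose boundary reads cyclically
   a, A, b, B (a, b the two joined free arms), the arc from a to b splits
   the region into the part bounded by A and the arc, which receives the
   new arm (a,b), and the part bounded by B and the arc, which receives
   the new arm (b,a). *)
Inductive move : state -> state -> Prop :=
| Move (pre post : seq (seq lab)) (r : seq lab) (i : nat)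
       (a b : lab) (A B : seq lab) (h : seq lab) :
    rot i r = a :: A ++ b :: B ->
    move (State (pre ++ r :: post) h)
         (State (pre ++ (rcons A (Nd a b)) :: (rcons B (Nd b a)) :: post)
                [:: Nd a b, Nd b a & h]).

Inductive reachable (n : nat) : state -> Prop :=
| reach_init : reachable n (init_state n)
| reach_step s s' : reachable n s -> move s s' -> reachable n s'.

(* No move is possible iff every region has at most one free arm. *)
Definition is_endstate (s : state) : Prop :=
  forall st', ~ move s st'.

Local Open Scope fset_scope.

(* Topological class of an endstate = its set of long labels. *)
Definition labels (s : state) : {fset lab} := [fset x | x in hist s].

Definition endstate_classes (n : nat) (E : {fset {fset lab}}) : Prop :=
  forall S : {fset lab},
    S \in E <-> exists s, [/\ reachable n s, is_endstate s & labels s = S].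

(* A region whose free arms read R can be played out exactly when its first
   and last blocks of consecutive arms collapse to single arms c and d, the arc
   from c to d cuts off the middle arms together with the new arm (c,d), and
   the middle region is played out in turn, leaving (d,c).  Regions evolve
   independently, so every play of a region has this shape, and endstates of
   the n-arm game correspond to ternary trees with n - 1 nodes.  Distinct trees
   give distinct label sets: the original arms below a label locate the blocks,
   so the final arm (d,c), then the blocks and their labels, are read off the
   label set.  Finally, forests of r ternary trees with m nodes number
   r/(3m+r) C(3m+r,m), by splitting off the first tree; r = 1 gives
   C(3m,m)/(2m+1). *)

From HB Require Import structures.
From mathcomp Require Import all_boot all_order all_algebra.
From mathcomp Require Import finmap.
From mathcomp Require Import zify ring.
Import GRing.Theory Num.Theory.
Set Implicit Arguments. Unset Strict Implicit. Unset Printing Implicit Defensive.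

Local Open Scope fset_scope.

Definition lset (s : seq lab) : {fset lab} := [fset x | x in s].

Lemma in_lset x s : (x \in lset s) = (x \in s).
Proof. by rewrite inE. Qed.

Lemma lset_cat s t : lset (s ++ t) = lset s `|` lset t.
Proof. by apply/fsetP=> x; rewrite in_fsetU !in_lset mem_cat. Qed.

Lemma lset_nil : lset [::] = fset0.
Proof. by apply/fsetP=> x; rewrite in_lset. Qed.

Ltac fset_solve := apply/fsetP => ?;
  rewrite ?(in_fsetU, in_lset, in_fset0, mem_cat, in_cons, in_nil, orbF, orFb);
  repeat match goal with |- context [?x \in ?s] => case: (x \in s) end;
  repeat match goal with |- context [?x == ?y] => case: (x == y) end; done.

Lemma cat_cons_eq_cat (T : Type) (s1 : seq T) x s2 t1 t2 :
  s1 ++ x :: s2 = t1 ++ t2 ->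
  (exists u, t1 = s1 ++ x :: u /\ s2 = u ++ t2) \/
  (exists u, s1 = t1 ++ u /\ t2 = u ++ x :: s2).
Proof.
elim: t1 s1 => [|y t1 IH] s1 /=; first by move=> <-; right; exists s1.
case: s1 => [|z s1] /= [<- E]; first by left; exists t1; rewrite E.
case: (IH _ E) => [[u [-> ->]]|[u [-> ->]]]; first by left; exists u.
by right; exists u.
Qed.

Lemma rot_rot_exists (T : Type) (s : seq T) i j : exists k, rot k (rot j s) = rot i s.
Proof.
have [/rot_oversize->|ltjs] := leqP (size s) j; first by exists i.
have Es : s = rot (size s - j) (rot j s) by rewrite -{1}(rotK j s) /rotr size_rot.
have [/rot_oversize->|ltis] := leqP (size s) i; first by exists (size s - j).
rewrite {2}Es rot_add_mod ?size_rot; try lia.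
by eexists.
Qed.

Lemma rot_eq_cons_cat (T : Type) (s : seq T) i a b A B :
  rot i s = a :: A ++ b :: B ->
  (exists X Z, s = X ++ a :: A ++ b :: Z /\ B = Z ++ X) \/
  (exists X Z, s = Z ++ b :: B ++ a :: X /\ A = X ++ Z).
Proof.
rewrite /rot; have := cat_take_drop i s.
move: (take i s) (drop i s) => U [|v V] /= <- /=.
  by rewrite cats0 => ->; left; exists [::], B; rewrite cats0.
case=> -> /esym E; case: (cat_cons_eq_cat E) => [[u [-> ->]]|[u [-> ->]]].
  by left; exists U, u.
by right; exists V, u; rewrite -catA.
Qed.

(** * Plays on lists of regions *)

Inductive step : seq (seq lab) -> seq lab -> seq (seq lab) -> Prop :=
| Step pre post r i a b A B : rot i r = a :: A ++ b :: B ->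
    step (pre ++ r :: post) [:: Nd a b; Nd b a]
         (pre ++ rcons A (Nd a b) :: rcons B (Nd b a) :: post).

Inductive steps : seq (seq lab) -> seq lab -> seq (seq lab) -> Prop :=
| steps0 rs : steps rs [::] rs
| stepsS rs N rs' M rs'' : step rs N rs' -> steps rs' M rs'' -> steps rs (M ++ N) rs''.

Lemma step_inv rs N rs' : step rs N rs' ->
  exists pre post r i a b A B,
    [/\ rs = pre ++ r :: post, rot i r = a :: A ++ b :: B, N = [:: Nd a b; Nd b a]
      & rs' = pre ++ rcons A (Nd a b) :: rcons B (Nd b a) :: post].
Proof. by case=> pre post r i a b A B E; exists pre, post, r, i, a, b, A, B. Qed.

Lemma step_move rs N rs' h : step rs N rs' -> move (State rs h) (State rs' (N ++ h)).
Proof. by case=> pre post r i a b A B E; apply: Move E. Qed.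

Lemma steps_trans rs N rs' M rs'' :
  steps rs N rs' -> steps rs' M rs'' -> steps rs (M ++ N) rs''.
Proof.
elim=> [rs0 H|rs0 N0 rs1 M0 rs2 st _ IH H]; first by rewrite cats0.
by rewrite catA; apply: stepsS st (IH H).
Qed.

Lemma steps_reachable n rs N rs' h : steps rs N rs' ->
  reachable n (State rs h) -> reachable n (State rs' (N ++ h)).
Proof.
move=> H; elim: H h => [//|rs0 N0 rs1 M rs2 st _ IH] h R.
by rewrite -catA; apply: IH; apply: reach_step R (step_move _ st).
Qed.

Definition arms n := [seq Lf i | i <- iota 1 n].

Lemma reachable_steps n s : reachable n s ->
  exists N, steps [:: arms n] N (regions s) /\ hist s = N ++ arms n.
Proof.
elim=> [|s1 s2 _ [N [HN Hh]] Hm]; first by exists [::]; split=> //; apply: steps0.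
case: Hm HN Hh => pre post r i a b A B h E /= HN ->.
exists ([:: Nd a b; Nd b a] ++ N); split=> //.
apply: steps_trans HN _; rewrite -[[:: _; _]]cats0.
by apply: stepsS (steps0 _); apply: Step E.
Qed.

Definition terminal (rs : seq (seq lab)) := all (fun r => size r <= 1) rs.

Lemma terminal_cat rs1 rs2 : terminal (rs1 ++ rs2) = terminal rs1 && terminal rs2.
Proof. exact: all_cat. Qed.

Lemma endstate_terminal s : is_endstate s <-> terminal (regions s).
Proof.
case: s => rs h /=; split.
  move=> H; apply/allP=> r rin; rewrite leqNgt; case/splitPr: rin H => pre post H.
  case: r H => [|a [|b B]] // H; exfalso.
  apply: (H (State (pre ++ rcons [::] (Nd a b) :: rcons B (Nd b a) :: post)
                   [:: Nd a b, Nd b a & h])).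
  by apply: (@Move pre post [:: a, b & B] 0 a b [::] B h); rewrite rot0.
move=> T s' Hm; inversion Hm as [pre post r i a b A B h' E Hr Hs]; subst.
have /(allP T) : r \in pre ++ r :: post by rewrite mem_cat mem_head orbT.
by rewrite -(size_rot i) E /= size_cat /= addnS.
Qed.

Lemma step_frame pre post rs N rs' :
  step rs N rs' -> step (pre ++ rs ++ post) N (pre ++ rs' ++ post).
Proof.
case=> p q r i a b A B E.
by have := Step (pre ++ p) (q ++ post) E; rewrite -!catA.
Qed.

Lemma steps_frame pre post rs N rs' :
  steps rs N rs' -> steps (pre ++ rs ++ post) N (pre ++ rs' ++ post).
Proof.
elim=> [rs0|rs0 N0 rs1 M rs2 st _ IH]; first exact: steps0.
exact: stepsS (step_frame pre post st) IH.
Qed.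

Lemma steps_cat_split rs N rs' : steps rs N rs' -> terminal rs' ->
  forall rs1 rs2, rs = rs1 ++ rs2 ->
  exists N1 N2 rs1' rs2', [/\ steps rs1 N1 rs1', steps rs2 N2 rs2',
    terminal rs1', terminal rs2' & lset N = lset N1 `|` lset N2].
Proof.
elim=> [rs0|rs0 N0 rs1 M rs2 st _ IH] T p1 p2 E.
  exists [::], [::], p1, p2; split; try exact: steps0.
  - by move: T; rewrite E terminal_cat => /andP[].
  - by move: T; rewrite E terminal_cat => /andP[].
  - by rewrite lset_nil fsetU0.
case/step_inv: st E IH => pre [post [r [i [a [b [A [B [-> Er -> ->]]]]]]]] E IH.
case: (cat_cons_eq_cat E) => [[u [Ep1 Epost]]|[u [Epre Ep2]]].
- have [|N1 [N2 [q1 [q2 [H1 H2 T1 T2 EM]]]]] :=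
    IH T (pre ++ rcons A (Nd a b) :: rcons B (Nd b a) :: u) p2; first by rewrite Epost -catA.
  exists (N1 ++ [:: Nd a b; Nd b a]), N2, q1, q2; split => //.
    by rewrite Ep1; apply: stepsS H1; apply: Step Er.
  by rewrite lset_cat EM lset_cat; fset_solve.
- have [|N1 [N2 [q1 [q2 [H1 H2 T1 T2 EM]]]]] :=
    IH T p1 (u ++ rcons A (Nd a b) :: rcons B (Nd b a) :: post); first by rewrite Epre -catA.
  exists N1, (N2 ++ [:: Nd a b; Nd b a]), q1, q2; split => //.
    by rewrite Ep2; apply: stepsS H2; apply: Step Er.
  by rewrite lset_cat EM lset_cat; fset_solve.
Qed.

Lemma step_single r N rs' : step [:: r] N rs' ->
  exists i a b A B, [/\ rot i r = a :: A ++ b :: B, N = [:: Nd a b; Nd b a]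
     & rs' = [:: rcons A (Nd a b); rcons B (Nd b a)]].
Proof.
case/step_inv=> [[|p pre]] [post [r' [i [a [b [A [B [/= Er Er' EN ->]]]]]]]].
  by case: Er Er' => -> <-; exists i, a, b, A, B.
by case: pre Er => [|? ?] [].
Qed.

Definition outcome (rs : seq (seq lab)) (L : {fset lab}) :=
  exists N rs', [/\ steps rs N rs', terminal rs' & L = lset N].

Lemma outcome_terminal rs : terminal rs -> outcome rs fset0.
Proof. by exists [::], rs; split=> //; [apply: steps0 | rewrite lset_nil]. Qed.

Lemma outcome_step rs N rs' L : step rs N rs' -> outcome rs' L -> outcome rs (lset N `|` L).
Proof.
move=> st [M [rs'' [H T ->]]]; exists (M ++ N), rs''; split=> //.
  exact: stepsS st H.
by rewrite lset_cat fsetUC.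
Qed.

Lemma outcome_cat rs1 rs2 L1 L2 :
  outcome rs1 L1 -> outcome rs2 L2 -> outcome (rs1 ++ rs2) (L1 `|` L2).
Proof.
move=> [N1 [rs1' [H1 T1 ->]]] [N2 [rs2' [H2 T2 ->]]].
exists (N2 ++ N1), (rs1' ++ rs2'); split.
- have := steps_frame [::] rs2 H1; have := steps_frame rs1' [::] H2.
  rewrite !cats0 /= => H2' H1'; exact: steps_trans H1' H2'.
- by rewrite terminal_cat T1 T2.
- by rewrite lset_cat fsetUC.
Qed.

Lemma outcome_cat_inv rs1 rs2 L : outcome (rs1 ++ rs2) L ->
  exists L1 L2, [/\ outcome rs1 L1, outcome rs2 L2 & L = L1 `|` L2].
Proof.
move=> [N [rs' [H T ->]]].
have [N1 [N2 [q1 [q2 [H1 H2 T1 T2 ->]]]]] := steps_cat_split H T (erefl _).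
by exists (lset N1), (lset N2); split=> //; [exists N1, q1 | exists N2, q2].
Qed.

Lemma outcome_rot r j L : outcome [:: r] L -> outcome [:: rot j r] L.
Proof.
move=> [N [rs' [H T ->]]].
inversion H as [rs0 E1 E2 E3|rs0 N0 rs1 M rs2 st H' E1 E2 E3]; subst.
  by rewrite lset_nil; apply: outcome_terminal; move: T; rewrite /terminal /= size_rot.
exists (M ++ N0), rs'; split=> //.
case/step_single: st H' => i [a [b [A [B [Ei -> ->]]]]] H'.
have [k Ek] := rot_rot_exists r i j.
apply: stepsS H'.
exact: (@Step [::] [::] (rot j r) k a b A B (etrans Ek Ei)).
Qed.

Lemma outcome_rotcat u v L : outcome [:: u ++ v] L -> outcome [:: v ++ u] L.
Proof. by move/(outcome_rot (size u)); rewrite rot_size_cat. Qed.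

Lemma outcome_region r L : outcome [:: r] L -> 1 < size r ->
  exists i a b A B L', [/\ rot i r = a :: A ++ b :: B,
    outcome [:: rcons A (Nd a b); rcons B (Nd b a)] L'
    & L = lset [:: Nd a b; Nd b a] `|` L'].
Proof.
move=> [N [rs' [H T ->]]] big.
inversion H as [rs0 E1 E2 E3|rs0 N0 rs1 M rs2 st H' E1 E2 E3]; subst.
  by move: T; rewrite /terminal /= andbT leqNgt big.
case/step_single: st H' => i [a [b [A [B [Ei -> ->]]]]] H'.
exists i, a, b, A, B, (lset M); split=> //; first by exists M, rs'.
by rewrite lset_cat fsetUC.
Qed.

Lemma outcome_arm x L : outcome [:: [:: x]] L -> L = fset0.
Proof.
move=> [N [rs' [H T ->]]].
inversion H as [rs0 E1 E2 E3|rs0 N0 rs1 M rs2 st H' E1 E2 E3]; subst.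
  by rewrite lset_nil.
case/step_single: st => i [a [b [A [B [Ei _ _]]]]].
by move: (congr1 size Ei); rewrite size_rot /= size_cat /= addnS.
Qed.

(** * Collapsing a region *)

(* [collapses R L y]: the region with free arms [R] can be played until the
   single arm [y] is left in it, creating the labels [L]. *)
Inductive collapses : seq lab -> {fset lab} -> lab -> Prop :=
| collapses_arm x : collapses [:: x] fset0 x
| collapses_join Yc Mid Yd Lc c Ld d Lm y :
    collapses Yc Lc c -> collapses Yd Ld d -> collapses (rcons Mid (Nd c d)) Lm y ->
    collapses (Yc ++ Mid ++ Yd) (Lc `|` Ld `|` lset [:: Nd c d; Nd d c] `|` Lm) (Nd d c).

Lemma collapses_eq R L y R' L' : collapses R L y -> R = R' -> L = L' -> collapses R' L' y.
Proof. by move=> H <- <-. Qed.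

Lemma outcome_collapse R L y : collapses R L y ->
  forall Ctx L', outcome [:: y :: Ctx] L' -> outcome [:: R ++ Ctx] (L `|` L').
Proof.
elim=> [x|Yc Mid Yd Lc c Ld d Lm ym _ IHc _ IHd _ IHm] Ctx L' HL'.
  by rewrite fset0U.
have cut : outcome [:: c :: Mid ++ d :: Ctx] (lset [:: Nd c d; Nd d c] `|` (Lm `|` L')).
  apply: (@outcome_step _ _ [:: rcons Mid (Nd c d); rcons Ctx (Nd d c)]).
    by have := @Step [::] [::] (c :: Mid ++ d :: Ctx) 0 c d Mid Ctx; rewrite rot0; apply.
  apply: (@outcome_cat [:: rcons Mid (Nd c d)] [:: rcons Ctx (Nd d c)]).
    by have := IHm [::] fset0 (outcome_terminal _); rewrite cats0 fsetU0; apply.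
  by rewrite -cats1; apply: (@outcome_rotcat [:: Nd d c]).
have /IHd : outcome [:: d :: Ctx ++ c :: Mid] (lset [:: Nd c d; Nd d c] `|` (Lm `|` L')).
  exact: (@outcome_rotcat (c :: Mid) _ _ cut).
rewrite catA => /(@outcome_rotcat (Yd ++ Ctx)) /IHc.
by rewrite -!catA; congr outcome; fset_solve.
Qed.

Lemma collapses_outcome R L y : collapses R L y -> outcome [:: R] L.
Proof.
move=> H; have := outcome_collapse H (@outcome_terminal [:: [:: y]] _).
by rewrite cats0 fsetU0; apply.
Qed.

(* Undoes a first move, whose arc from [a] to [b] cut the region into
   [rcons X2 (Nd a b)] and [R]. *)
Lemma collapses_subst a b X2 L1 y1 : collapses (rcons X2 (Nd a b)) L1 y1 ->
  forall R L y, collapses R L y -> forall X1 X3, R = X1 ++ Nd b a :: X3 ->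
  collapses (X1 ++ a :: X2 ++ b :: X3) (L1 `|` L `|` lset [:: Nd a b; Nd b a]) y.
Proof.
move=> H1 R L y; elim=> {R L y} [x|Yc Mid Yd Lc c Ld d Lm y Hc IHc Hd IHd Hm IHm] X1 X3 E.
  case: X1 E => [|w [|? ?] []] //= [-> <-].
  apply: collapses_eq (collapses_join (collapses_arm a) (collapses_arm b) H1) _ _ => //.
  fset_solve.
case: (cat_cons_eq_cat (esym E)) => [[u [Ep1 Epost]]|[u [Epre Ep2]]].
- apply: collapses_eq (collapses_join (IHc _ _ Ep1) Hd Hm) _ _.
    by rewrite Epost; do ?rewrite -catA /=.
  fset_solve.
case: (cat_cons_eq_cat (esym Ep2)) => [[v [Em Ex3]]|[v [Eu Ed]]].
- have E' : rcons Mid (Nd c d) = u ++ Nd b a :: rcons v (Nd c d) by rewrite Em rcons_cat.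
  have Hm' : collapses (rcons (u ++ a :: X2 ++ b :: v) (Nd c d))
                       (L1 `|` Lm `|` lset [:: Nd a b; Nd b a]) y.
    by apply: collapses_eq (IHm _ _ E') _ _ => //; rewrite rcons_cat /= rcons_cat.
  apply: collapses_eq (collapses_join Hc Hd Hm') _ _.
    by rewrite Epre Ex3; do ?rewrite -catA /=.
  fset_solve.
- apply: collapses_eq (collapses_join Hc (IHd _ _ Ed) Hm) _ _.
    by rewrite Epre Eu; do ?rewrite -catA /=.
  fset_solve.
Qed.

Lemma outcome_collapses R L : outcome [:: R] L -> 0 < size R -> exists y, collapses R L y.
Proof.
have [k leRk] := ubnP (size R); elim: k => // k IH in R L leRk * => HE R_gt0.
have [|big] := leqP (size R) 1.
  case: R HE R_gt0 {leRk} => [|x [|]] // HE _ _.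
  by rewrite (outcome_arm HE); exists x; apply: collapses_arm.
have [i [a [b [A [B [L' [Ei HE' ->]]]]]]] := outcome_region HE big.
have [L1 [L2 [HA HB ->]]] := @outcome_cat_inv [:: rcons A (Nd a b)] [:: rcons B (Nd b a)] _ HE'.
have join a' b' X1 X2 X3 L1' L2' :
    outcome [:: rcons X2 (Nd a' b')] L1' -> outcome [:: rcons (X3 ++ X1) (Nd b' a')] L2' ->
    size (X1 ++ a' :: X2 ++ b' :: X3) = size R ->
    exists y, collapses (X1 ++ a' :: X2 ++ b' :: X3)
                        (L1' `|` L2' `|` lset [:: Nd a' b'; Nd b' a']) y.
  move=> H1 H2 sz; rewrite !size_cat /= size_cat /= in sz.
  have [y1 C1] : exists y, collapses (rcons X2 (Nd a' b')) L1' y.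
    by apply: (IH _ _ _ H1); rewrite size_rcons; lia.
  have H2' : outcome [:: X1 ++ Nd b' a' :: X3] L2'.
    by move: H2; rewrite -cats1 -catA => /outcome_rotcat; rewrite -catA.
  have [y C] : exists y, collapses (X1 ++ Nd b' a' :: X3) L2' y.
    by apply: (IH _ _ _ H2'); rewrite size_cat /=; lia.
  by exists y; apply: collapses_subst C1 _ _ _ C _ _ (erefl _).
have [[X [Z [ER EB]]]|[X [Z [ER EA]]]] := rot_eq_cons_cat Ei.
  have := join a b X A Z L1 L2 HA; rewrite -EB -ER => /(_ HB erefl) [y C].
  by exists y; apply: collapses_eq C _ _ => //; fset_solve.
have := join b a Z B X L2 L1 HB; rewrite -EA -ER => /(_ HA erefl) [y C].
by exists y; apply: collapses_eq C _ _ => //; fset_solve.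
Qed.

(** * Ternary trees *)

Inductive tree3 := Leaf3 | Node3 of tree3 & tree3 & tree3.

Fixpoint tree3_enc (t : tree3) : GenTree.tree nat :=
  match t with
  | Leaf3 => GenTree.Leaf 0
  | Node3 a b c => GenTree.Node 0 [:: tree3_enc a; tree3_enc b; tree3_enc c]
  end.

Fixpoint tree3_dec (g : GenTree.tree nat) : option tree3 :=
  match g with
  | GenTree.Leaf _ => Some Leaf3
  | GenTree.Node _ [:: ga; gb; gc] =>
      if (tree3_dec ga, tree3_dec gb, tree3_dec gc) is (Some a, Some b, Some c)
      then Some (Node3 a b c) else None
  | _ => None
  end.

Lemma tree3_encK : pcancel tree3_enc tree3_dec.
Proof. by elim=> [|a IHa b IHb c IHc] //=; rewrite IHa IHb IHc. Qed.

HB.instance Definition _ := Countable.copy tree3 (pcan_type tree3_encK).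

Fixpoint nodes (t : tree3) : nat :=
  if t is Node3 a b c then (nodes a + nodes b + nodes c).+1 else 0.

(* [play t R] plays the region [R] along [collapses]; the subtrees of a node
   have one arm fewer than the first block, as many arms as the middle and one
   fewer than the last block.  It returns the labels created and the arm left,
   and is meaningful when [size R = nodes t + 1]. *)
Fixpoint play (t : tree3) (R : seq lab) : {fset lab} * lab :=
  match t with
  | Leaf3 => (fset0, head (Lf 0) R)
  | Node3 t1 t2 t3 =>
    let pc := play t1 (take (nodes t1).+1 R) in
    let pd := play t3 (drop (nodes t2) (drop (nodes t1).+1 R)) in
    let pm := play t2 (rcons (take (nodes t2) (drop (nodes t1).+1 R)) (Nd pc.2 pd.2)) in
    (pc.1 `|` pd.1 `|` lset [:: Nd pc.2 pd.2; Nd pd.2 pc.2] `|` pm.1, Nd pd.2 pc.2)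
  end.

Lemma nodes_Node3_split t1 t2 t3 (R : seq lab) : (nodes (Node3 t1 t2 t3)).+1 = size R ->
  exists Yc Mid Yd, [/\ R = Yc ++ Mid ++ Yd, (nodes t1).+1 = size Yc,
    nodes t2 = size Mid & (nodes t3).+1 = size Yd].
Proof.
move=> /= HR.
exists (take (nodes t1).+1 R), (take (nodes t2) (drop (nodes t1).+1 R)),
       (drop (nodes t2) (drop (nodes t1).+1 R)); split.
- by rewrite !cat_take_drop.
- by rewrite size_take; case: ifP => //; lia.
- by rewrite size_take size_drop; case: ifP => //; lia.
- by rewrite !size_drop; lia.
Qed.

Lemma play_Node3_cat t1 t2 t3 (Yc Mid Yd : seq lab) :
  (nodes t1).+1 = size Yc -> nodes t2 = size Mid ->
  play (Node3 t1 t2 t3) (Yc ++ Mid ++ Yd) =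
    let c := (play t1 Yc).2 in let d := (play t3 Yd).2 in
    ((play t1 Yc).1 `|` (play t3 Yd).1 `|` lset [:: Nd c d; Nd d c] `|`
       (play t2 (rcons Mid (Nd c d))).1, Nd d c).
Proof.
by move=> s1 s2; rewrite /= s1 s2 take_size_cat // drop_size_cat // take_size_cat // drop_size_cat.
Qed.

Lemma play_collapses t R : (nodes t).+1 = size R -> collapses R (play t R).1 (play t R).2.
Proof.
elim: t R => [|t1 IH1 t2 IH2 t3 IH3] R.
  by case: R => [|x [|]] //= _; apply: collapses_arm.
case/nodes_Node3_split=> Yc [Mid [Yd [-> s1 s2 s3]]].
rewrite play_Node3_cat //; apply: collapses_join; [exact: IH1 | exact: IH3 | apply: IH2].
by rewrite size_rcons s2.
Qed.

Lemma collapses_play R L y : collapses R L y ->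
  exists t, (nodes t).+1 = size R /\ play t R = (L, y).
Proof.
elim=> [x|Yc Mid Yd Lc c Ld d Lm ym _ [t1 [s1 e1]] _ [t3 [s3 e3]] _ [t2 [s2 e2]]].
  by exists Leaf3.
rewrite size_rcons in s2; case: s1 s2 => s1 [s2].
exists (Node3 t1 t2 t3); split; first by rewrite /= !size_cat; lia.
by rewrite play_Node3_cat // e1 e3 /= e2.
Qed.

(** * Distinct trees give distinct label sets *)

Fixpoint leaves (x : lab) : seq nat :=
  match x with Lf i => [:: i] | Nd a b => leaves a ++ leaves b end.

Definition rleaves (R : seq lab) : seq nat := flatten (map leaves R).

Definition simple (R : seq lab) := uniq (rleaves R).

(* [X] is a union of leaf sets of arms of [R]. *)
Definition saturated (R : seq lab) (X : seq nat) :=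
  {subset X <= rleaves R} /\
  forall r, r \in R -> has (mem X) (leaves r) -> {subset leaves r <= X}.

Definition disjointn (X Z : seq nat) := forall i, i \in X -> i \in Z -> False.

Lemma leaves_exists x : exists i, i \in leaves x.
Proof.
elim: x => [i|a [i Hi] b _]; first by exists i; rewrite inE.
by exists i; rewrite mem_cat Hi.
Qed.

Lemma rleaves_cat R S : rleaves (R ++ S) = rleaves R ++ rleaves S.
Proof. by rewrite /rleaves map_cat flatten_cat. Qed.

Lemma rleaves_rcons R x : rleaves (rcons R x) = rleaves R ++ leaves x.
Proof. by rewrite -cats1 rleaves_cat /rleaves /= cats0. Qed.

Lemma mem_rleaves r R : r \in R -> {subset leaves r <= rleaves R}.
Proof. by move=> rR i ir; apply/flatten_mapP; exists r. Qed.

Lemma simple_cat R S : simple (R ++ S) ->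
  [/\ simple R, simple S & disjointn (rleaves R) (rleaves S)].
Proof.
rewrite /simple rleaves_cat cat_uniq => /and3P[uR nh uS]; split=> // i iR iS.
by move/hasP: nh; apply; exists i.
Qed.

Lemma saturated_infix P Y S X : simple (P ++ Y ++ S) -> saturated Y X ->
  saturated (P ++ Y ++ S) X.
Proof.
move=> g [sX sr]; have [_ gYS dP] := simple_cat g; have [_ _ dY] := simple_cat gYS.
split=> [i /sX iY|r]; first by rewrite !rleaves_cat !mem_cat iY orbT.
rewrite !mem_cat => /or3P[rP|rY|rS] /hasP[i ir iX].
- by case: (dP i (mem_rleaves rP ir)); rewrite rleaves_cat mem_cat sX.
- by apply: sr => //; apply/hasP; exists i.
- by case: (dY i (sX _ iX) (mem_rleaves rS ir)).
Qed.

Lemma saturated_prefix Y S X : simple (Y ++ S) -> saturated Y X -> saturated (Y ++ S) X.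
Proof. exact: (@saturated_infix [::]). Qed.

Lemma saturated_suffix P Y X : simple (P ++ Y) -> saturated Y X -> saturated (P ++ Y) X.
Proof. by move=> g; have := @saturated_infix P Y [::] X; rewrite cats0; apply. Qed.

Lemma saturated_cat R X Z : saturated R X -> saturated R Z -> saturated R (X ++ Z).
Proof.
move=> [sX rX] [sZ rZ]; split=> [i|r rR /hasP[i ir iXZ]].
  by rewrite mem_cat => /orP[/sX|/sZ].
have : i \in X ++ Z := iXZ.
rewrite mem_cat => /orP[iX|iZ] j jr; rewrite mem_cat.
  by rewrite (rX r rR _ j jr) //; apply/hasP; exists i.
by rewrite (rZ r rR _ j jr) ?orbT //; apply/hasP; exists i.
Qed.

Lemma saturated_arm x : saturated [:: x] (leaves x).
Proof.
split=> [i|r]; first by rewrite /rleaves /= cats0.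
by rewrite inE => /eqP -> _.
Qed.

Lemma saturated_absorb R X r : saturated R X -> r \in R ->
  forall i, i \in X -> i \in leaves r -> {subset leaves r <= X}.
Proof. by move=> [_ H] rR i iX ir; apply: H rR _; apply/hasP; exists i. Qed.

Lemma saturated_lift Yc Mid Yd c d X :
  simple (Yc ++ Mid ++ Yd) ->
  saturated (Yc ++ Mid ++ Yd) (leaves c) -> saturated (Yc ++ Mid ++ Yd) (leaves d) ->
  {subset leaves c <= rleaves Yc} -> {subset leaves d <= rleaves Yd} ->
  saturated (rcons Mid (Nd c d)) X -> saturated (Yc ++ Mid ++ Yd) X.
Proof.
move=> g [_ rc] [_ rd] cY dY [sX rX].
have [_ gMY dYc] := simple_cat g; have [_ _ dM] := simple_cat gMY.
have cdR : Nd c d \in rcons Mid (Nd c d) by rewrite mem_rcons mem_head.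
split=> [i /sX|r rR /hasP[i ir iX]].
  rewrite rleaves_rcons !mem_cat !rleaves_cat !mem_cat => /or3P[->|/cY->|/dY->];
  by rewrite ?orbT.
have := sX _ iX; rewrite rleaves_rcons /= !mem_cat => /or3P[iM|ic|id].
- have rM : r \in Mid.
    move: rR; rewrite !mem_cat => /or3P[rc'|//|rd'].
      by case: (dYc i (mem_rleaves rc' ir)); rewrite rleaves_cat mem_cat iM.
    by case: (dM i iM (mem_rleaves rd' ir)).
  by apply: rX; [rewrite mem_rcons inE rM orbT | apply/hasP; exists i].
- have sub1 : {subset leaves r <= leaves c} by apply: rc => //; apply/hasP; exists i.
  have icd : i \in leaves (Nd c d) by rewrite /= mem_cat ic.
  have sub2 := saturated_absorb (conj sX rX) cdR iX icd.
  by move=> j /sub1 jc; apply: sub2; rewrite /= mem_cat jc.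
- have sub1 : {subset leaves r <= leaves d} by apply: rd => //; apply/hasP; exists i.
  have icd : i \in leaves (Nd c d) by rewrite /= mem_cat id orbT.
  have sub2 := saturated_absorb (conj sX rX) cdR iX icd.
  by move=> j /sub1 jd; apply: sub2; rewrite /= mem_cat jd orbT.
Qed.

Lemma simple_rcons Yc Mid Yd c d :
  simple (Yc ++ Mid ++ Yd) -> uniq (leaves c) -> uniq (leaves d) ->
  {subset leaves c <= rleaves Yc} -> {subset leaves d <= rleaves Yd} ->
  simple (rcons Mid (Nd c d)).
Proof.
move=> g uc ud cY dY.
have [_ gMY dYc] := simple_cat g; have [gM _ dM] := simple_cat gMY.
rewrite /simple rleaves_rcons /= cat_uniq cat_uniq -/(simple Mid) gM uc ud /= andbT.
apply/andP; split; apply/negP=> /hasP[i].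
  rewrite mem_cat => /orP[/cY ic|/dY id] iM.
    by apply: (dYc i ic); rewrite rleaves_cat mem_cat iM.
  exact: (dM i iM id).
by move=> /dY id /cY ic; apply: (dYc i ic); rewrite rleaves_cat mem_cat id orbT.
Qed.

Lemma head_cat_nonnil (T : Type) (x : T) s t : 0 < size s -> head x (s ++ t) = head x s.
Proof. by case: s. Qed.

Lemma last_cat_nonnil (T : Type) (x : T) s t : 0 < size t -> last x (s ++ t) = last x t.
Proof. by case: t => // y t _; rewrite last_cat. Qed.

Lemma mem_head_nonnil (T : eqType) (x : T) s : 0 < size s -> head x s \in s.
Proof. by case: s => // y s _; apply: mem_head. Qed.

Lemma mem_last_nonnil (T : eqType) (x : T) s : 0 < size s -> last x s \in s.
Proof. by case: s => // y s _ /=; apply: mem_last. Qed.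

Definition labels_saturated R (L : {fset lab}) := forall l, l \in L ->
  exists u v, [/\ l = Nd u v, saturated R (leaves u), saturated R (leaves v)
                & disjointn (leaves u) (leaves v)].

Lemma labels_saturated_lift R R' L : (forall X, saturated R X -> saturated R' X) ->
  labels_saturated R L -> labels_saturated R' L.
Proof.
move=> lift HL l /HL[u [v [-> su sv duv]]].
by exists u, v; split=> //; apply: lift.
Qed.

Lemma play_inv t R : simple R -> (nodes t).+1 = size R ->
  [/\ saturated R (leaves (play t R).2), {subset leaves (head (Lf 0) R) <= leaves (play t R).2},
      {subset leaves (last (Lf 0) R) <= leaves (play t R).2}, uniq (leaves (play t R).2)
    & labels_saturated R (play t R).1].
Proof.
elim: t R => [|t1 IH1 t2 IH2 t3 IH3] R gR HR.
  case: R gR HR => [|x [|]] //= gR _; split=> //; first exact: saturated_arm.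
  by move: gR; rewrite /simple /rleaves /= cats0.
have [Yc [Mid [Yd [ER s1 s2 s3]]]] := nodes_Node3_split HR; subst R.
rewrite play_Node3_cat //=.
have [gYc gMY dYc] := simple_cat gR; have [_ gYd _] := simple_cat gMY.
have [sc hc _ uc Lc] := IH1 Yc gYc s1.
have [sd _ ld ud Ld] := IH3 Yd gYd s3.
set c := (play t1 Yc).2 in sc hc uc Lc *.
set d := (play t3 Yd).2 in sd ld ud Ld *.
have cY : {subset leaves c <= rleaves Yc} by case: sc.
have dY : {subset leaves d <= rleaves Yd} by case: sd.
have s2' : (nodes t2).+1 = size (rcons Mid (Nd c d)) by rewrite size_rcons s2.
have [_ _ _ _ Lm] := IH2 _ (simple_rcons gR uc ud cY dY) s2'.
have liftYd X : saturated Yd X -> saturated (Yc ++ Mid ++ Yd) X.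
  by move=> sX; rewrite catA; apply: saturated_suffix sX; rewrite -catA.
have scR := saturated_prefix gR sc.
have sdR := liftYd _ sd.
have dcd : disjointn (leaves c) (leaves d).
  by move=> i /cY ic /dY id; apply: (dYc i ic); rewrite rleaves_cat mem_cat id orbT.
split.
- exact: saturated_cat.
- by rewrite head_cat_nonnil -?s1 // => i /hc ic; rewrite mem_cat ic orbT.
- rewrite catA last_cat_nonnil -?s3 // => i /ld id; by rewrite mem_cat id.
- rewrite cat_uniq ud uc andbT /=; apply/hasP => -[i ic id].
  exact: (dcd i ic id).
- move=> l; rewrite !in_fsetU in_lset !inE.
  case/orP=> [/orP[/orP[lc|ld']|/orP[/eqP->|/eqP->]]|lm].
  + by apply: labels_saturated_lift Lc _ lc => X; apply: saturated_prefix.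
  + exact: labels_saturated_lift liftYd Ld _ ld'.
  + by exists c, d.
  + by exists d, c; split=> // i id ic; apply: (dcd i ic id).
  + by apply: labels_saturated_lift Lm _ lm => X; apply: saturated_lift.
Qed.

Definition within (R : seq lab) (z : lab) := all (mem (rleaves R)) (leaves z).

Lemma notin_within R z i : i \in leaves z -> i \notin rleaves R -> ~~ within R z.
Proof. by move=> iz iR; apply/allP => /(_ i iz); apply/negP. Qed.

Lemma within_disjoint R S z : disjointn (rleaves R) (rleaves S) -> within R z -> ~~ within S z.
Proof.
move=> dRS /allP zR; have [i iz] := leaves_exists z.
by apply: (notin_within iz); apply/negP; apply: dRS (zR i iz).
Qed.

Lemma labels_saturated_within R L z : labels_saturated R L -> z \in L -> within R z.
Proof.
move=> HL /HL[u [v [-> [su _] [sv _] _]]].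
by apply/allP=> i; rewrite mem_cat => /orP[/su|/sv].
Qed.

Lemma fsetU_sep (K : choiceType) (p : pred K) (A B : {fset K}) :
  {in A, forall z, p z} -> {in B, forall z, ~~ p z} -> A = [fset z in A `|` B | p z].
Proof.
move=> pA pB; apply/fsetP=> z; rewrite !inE.
by case: (boolP (z \in A)) => [/pA -> //|_] /=; case: (boolP (z \in B)) => // /pB /negPf ->.
Qed.

Section NodeLabels.

Variables (t1 t2 t3 : tree3) (Yc Mid Yd : seq lab).
Hypotheses (simpleR : simple (Yc ++ Mid ++ Yd)) (size1 : (nodes t1).+1 = size Yc)
  (size2 : nodes t2 = size Mid) (size3 : (nodes t3).+1 = size Yd).

Local Notation c := (play t1 Yc).2.
Local Notation d := (play t3 Yd).2.
Local Notation inner := (rcons Mid (Nd c d)).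
Local Notation cd := (lset [:: Nd c d; Nd d c]).
Local Notation U := ((play t1 Yc).1 `|` (play t3 Yd).1 `|` cd `|` (play t2 inner).1).

Lemma node_blocks :
  [/\ simple Yc, simple Yd, disjointn (rleaves Yc) (rleaves Mid),
      disjointn (rleaves Yc) (rleaves Yd) & disjointn (rleaves Mid) (rleaves Yd)].
Proof.
have [gYc gMY dYc] := simple_cat simpleR; have [_ gYd dMY] := simple_cat gMY.
split=> // i iC ?; apply: (dYc i iC); rewrite rleaves_cat mem_cat.
  by apply/orP; left.
by apply/orP; right.
Qed.

Lemma node_arms : {subset leaves c <= rleaves Yc} /\ {subset leaves d <= rleaves Yd}.
Proof.
have [gYc gYd _ _ _] := node_blocks.
by have [[? _] _ _ _ _] := play_inv gYc size1; have [[? _] _ _ _ _] := play_inv gYd size3.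
Qed.

Lemma node_inner_labels : labels_saturated inner (play t2 inner).1.
Proof.
have [gYc gYd _ _ _] := node_blocks; have [cY dY] := node_arms.
have [[_ _] _ _ uc _] := play_inv gYc size1; have [[_ _] _ _ ud _] := play_inv gYd size3.
have sz : (nodes t2).+1 = size inner by rewrite size_rcons size2.
by have [] := play_inv (simple_rcons simpleR uc ud cY dY) sz.
Qed.

Lemma within_labels_c z : z \in (play t1 Yc).1 -> within Yc z && ~~ within Yd z.
Proof.
have [gYc _ _ dCD _] := node_blocks; have [_ _ _ _ Lc] := play_inv gYc size1.
by move/(labels_saturated_within Lc) => zC; rewrite zC (within_disjoint dCD).
Qed.

Lemma within_labels_d z : z \in (play t3 Yd).1 -> within Yd z && ~~ within Yc z.
Proof.
have [_ gYd _ dCD _] := node_blocks; have [_ _ _ _ Ld] := play_inv gYd size3.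
move/(labels_saturated_within Ld) => zD; rewrite zD (within_disjoint _ zD) //.
by move=> i iD iC; apply: dCD iC iD.
Qed.

Lemma within_cd z : z \in cd -> ~~ within Yc z && ~~ within Yd z.
Proof.
have [_ _ _ dCD _] := node_blocks; have [cY dY] := node_arms.
have [i ic] := leaves_exists c; have [j jd] := leaves_exists d.
have iD : i \notin rleaves Yd by apply/negP; apply: dCD (cY _ ic).
have jC : j \notin rleaves Yc by apply/negP => /dCD; apply; apply: dY.
rewrite in_lset !inE => /orP[] /eqP -> /=;
  by rewrite (@notin_within _ _ j) ?(@notin_within _ _ i) // mem_cat ?ic ?jd ?orbT.
Qed.

Lemma inner_absorb u : saturated inner (leaves u) -> forall i, i \in leaves u ->
  i \in leaves c ++ leaves d -> {subset leaves c ++ leaves d <= leaves u}.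
Proof.
have cdR : Nd c d \in inner by rewrite mem_rcons mem_head.
by move=> su i iu icd; apply: saturated_absorb su cdR i iu icd.
Qed.

Lemma within_labels_inner z : z \in (play t2 inner).1 ->
  [&& ~~ within Yc z, ~~ within Yd z & z \notin cd].
Proof.
have [_ _ dCM dCD dMD] := node_blocks; have [cY dY] := node_arms.
move=> /node_inner_labels [u [v [-> su sv duv]]].
have [i iu] := leaves_exists u.
have iz : i \in leaves (Nd u v) by rewrite /= mem_cat iu.
have : i \in rleaves inner by case: su => /(_ i iu).
rewrite rleaves_rcons mem_cat => /orP[iM|icd].
  have iC : i \notin rleaves Yc by apply/negP => /dCM; apply.
  have iD : i \notin rleaves Yd by apply/negP; apply: dMD iM.
  rewrite (notin_within iz iC) (notin_within iz iD) in_lset !inE /=.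
  apply/negP => /orP[] /eqP [Eu Ev]; subst.
    exact: dCM (cY _ iu) iM.
  exact: dMD iM (dY _ iu).
have sub := inner_absorb su iu icd.
have [j jc] := leaves_exists c; have [k kd] := leaves_exists d.
have ju : j \in leaves u by apply: sub; rewrite mem_cat jc.
have ku : k \in leaves u by apply: sub; rewrite mem_cat kd orbT.
have jD : j \notin rleaves Yd by apply/negP; apply: dCD (cY _ jc).
have kC : k \notin rleaves Yc by apply/negP => /dCD; apply; apply: dY.
have jz : j \in leaves (Nd u v) by rewrite /= mem_cat ju.
have kz : k \in leaves (Nd u v) by rewrite /= mem_cat ku.
rewrite (notin_within kz kC) (notin_within jz jD) in_lset !inE /=.
apply/negP => /orP[] /eqP [Eu Ev]; subst.
  exact: duv ku kd.
exact: duv ju jc.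
Qed.

Lemma node_final_label u v : Nd u v \in U ->
  {subset leaves (last (Lf 0) Yd) <= leaves u} -> {subset leaves (head (Lf 0) Yc) <= leaves v} ->
  Nd u v = Nd d c.
Proof.
have [gYc gYd _ dCD _] := node_blocks; have [cY _] := node_arms.
have [_ hc _ _ _] := play_inv gYc size1; have [_ _ ld _ _] := play_inv gYd size3.
have [i il] := leaves_exists (last (Lf 0) Yd); have [j jh] := leaves_exists (head (Lf 0) Yc).
have iD : i \in rleaves Yd by apply: mem_rleaves il; apply: mem_last_nonnil; rewrite -size3.
have jC : j \in rleaves Yc by apply: mem_rleaves jh; apply: mem_head_nonnil; rewrite -size1.
move=> + /(_ i il) iu /(_ j jh) jv.
have iz : i \in leaves (Nd u v) by rewrite /= mem_cat iu.
have jz : j \in leaves (Nd u v) by rewrite /= mem_cat jv orbT.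
rewrite !in_fsetU => /orP[/orP[/orP[/within_labels_c|/within_labels_d]|]|].
- by case/andP=> /allP /(_ i iz) iC _; case: (dCD i iC iD).
- by case/andP=> /allP /(_ j jz) jD _; case: (dCD j jC jD).
- rewrite in_lset !inE => /orP[] /eqP // [Eu _]; subst u.
  by case: (dCD i (cY _ iu) iD).
move=> /node_inner_labels [_ [_ [[<- <-] su sv duv]]].
have jcd : j \in leaves c ++ leaves d by rewrite mem_cat (hc _ jh).
have icd : i \in leaves c ++ leaves d by rewrite mem_cat (ld _ il) orbT.
by case: (duv i iu (inner_absorb sv jv jcd icd)).
Qed.

Lemma node_labels_c : (play t1 Yc).1 = [fset z in U | within Yc z].
Proof.
rewrite -!fsetUA; apply: fsetU_sep => [z /within_labels_c /andP[] //|z].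
rewrite !in_fsetU => /orP[/within_labels_d /andP[_ //]|/orP[/within_cd /andP[//]|]].
by move/within_labels_inner => /andP[].
Qed.

Lemma node_labels_d : (play t3 Yd).1 = [fset z in U | within Yd z].
Proof.
have -> : U = (play t3 Yd).1 `|` ((play t1 Yc).1 `|` cd `|` (play t2 inner).1) by fset_solve.
apply: fsetU_sep => [z /within_labels_d /andP[] //|z].
rewrite !in_fsetU => /orP[/orP[/within_labels_c /andP[_ //]|/within_cd /andP[_ //]]|].
by move/within_labels_inner => /and3P[].
Qed.

Lemma node_labels_inner :
  (play t2 inner).1 = [fset z in U | [&& ~~ within Yc z, ~~ within Yd z & z \notin cd]].
Proof.
rewrite fsetUC; apply: fsetU_sep => [z /within_labels_inner //|z].
rewrite !in_fsetU => /orP[/orP[/within_labels_c /andP[-> //]|/within_labels_d /andP[-> _]]|zcd].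
  by rewrite andbF.
by rewrite zcd !andbF.
Qed.

End NodeLabels.

Lemma play_Node3_arm t1 t2 t3 Yc Mid Yd :
  (nodes t1).+1 = size Yc -> nodes t2 = size Mid ->
  (play (Node3 t1 t2 t3) (Yc ++ Mid ++ Yd)).2 = Nd (play t3 Yd).2 (play t1 Yc).2.
Proof. by move=> s1 s2; rewrite play_Node3_cat. Qed.

Lemma play_arm_unique t t' R : simple R -> (nodes t).+1 = size R -> (nodes t').+1 = size R ->
  (play t R).1 = (play t' R).1 -> (play t R).2 = (play t' R).2.
Proof.
case: t t' => [|t1 t2 t3] [|t1' t2' t3'] gR s s' EL //; try by rewrite -s in s'.
have [Yc [Mid [Yd [ER s1 s2 s3]]]] := nodes_Node3_split s.
have [Yc' [Mid' [Yd' [ER' s1' s2' s3']]]] := nodes_Node3_split s'.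
have hR : head (Lf 0) R = head (Lf 0) Yc by rewrite ER head_cat_nonnil -?s1.
have hR' : head (Lf 0) R = head (Lf 0) Yc' by rewrite ER' head_cat_nonnil -?s1'.
have lR : last (Lf 0) R = last (Lf 0) Yd by rewrite ER catA last_cat_nonnil -?s3.
have lR' : last (Lf 0) R = last (Lf 0) Yd' by rewrite ER' catA last_cat_nonnil -?s3'.
have gR' : simple (Yc' ++ Mid' ++ Yd') by rewrite -ER'.
have [gYc' gYd' _ _ _] := node_blocks gR'.
have [_ hc' _ _ _] := play_inv gYc' s1'; have [_ _ ld' _ _] := play_inv gYd' s3'.
rewrite ER in gR; move: EL; rewrite {1 3}ER ER' !play_Node3_cat //= => EL.
apply: esym; apply: (node_final_label (t2 := t2) gR) => //.
- by rewrite EL !in_fsetU in_lset !inE eqxx !orbT.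
- by rewrite -lR lR'.
by rewrite -hR hR'.
Qed.

Lemma cat_eq_cat_le (T : Type) (P1 Q1 P2 Q2 : seq T) : P1 ++ Q1 = P2 ++ Q2 ->
  size P1 <= size P2 -> exists W, P2 = P1 ++ W /\ Q1 = W ++ Q2.
Proof.
elim: P1 P2 => [|x P1 IH] [|y P2] //= E; first by exists [::].
- by exists (y :: P2).
by case: E => -> /IH H /H [W [-> ->]]; exists W.
Qed.

Lemma simple_catC P Q : simple (P ++ Q) = simple (Q ++ P).
Proof. by rewrite /simple !rleaves_cat; apply: perm_uniq; rewrite perm_catC. Qed.

Lemma simple_cat_cover P Q x : simple (P ++ Q) -> x \in P ->
  ~ {subset leaves x <= rleaves Q}.
Proof.
move=> /simple_cat[_ _ dPQ] xP xQ; have [i ix] := leaves_exists x.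
exact: dPQ i (mem_rleaves xP ix) (xQ i ix).
Qed.

Lemma prefix_cover_unique P1 Q1 P2 Q2 (X : seq nat) :
  simple (P1 ++ Q1) -> P1 ++ Q1 = P2 ++ Q2 -> 0 < size P1 -> 0 < size P2 ->
  {subset X <= rleaves P1} -> {subset leaves (last (Lf 0) P1) <= X} ->
  {subset X <= rleaves P2} -> {subset leaves (last (Lf 0) P2) <= X} ->
  P1 = P2 /\ Q1 = Q2.
Proof.
wlog le12 : P1 Q1 P2 Q2 / size P1 <= size P2 => [Hwlog|].
  move=> g E n1 n2 a1 b1 a2 b2; have [le|/ltnW le] := leqP (size P1) (size P2).
    exact: Hwlog.
  by case: (Hwlog P2 Q2 P1 Q1 le _ (esym E) n2 n1 a2 b2 a1 b1) => [|-> ->]; rewrite // -E.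
move=> g E n1 n2 a1 b1 _ b2; have [[|w W] [E2 E1]] := cat_eq_cat_le E le12.
  by rewrite E2 E1 cats0.
have lW : last (Lf 0) P2 \in Q1 by rewrite E1 E2 last_cat /= -cat_cons mem_cat mem_last.
have g' : simple (Q1 ++ P1) by rewrite simple_catC.
by case: (simple_cat_cover g' lW) => i /b2 /a1.
Qed.

Lemma suffix_cover_unique P1 Q1 P2 Q2 (X : seq nat) :
  simple (P1 ++ Q1) -> P1 ++ Q1 = P2 ++ Q2 -> 0 < size Q1 -> 0 < size Q2 ->
  {subset X <= rleaves Q1} -> {subset leaves (head (Lf 0) Q1) <= X} ->
  {subset X <= rleaves Q2} -> {subset leaves (head (Lf 0) Q2) <= X} ->
  P1 = P2 /\ Q1 = Q2.
Proof.
wlog le12 : P1 Q1 P2 Q2 / size P1 <= size P2 => [Hwlog|].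
  move=> g E n1 n2 a1 b1 a2 b2; have [le|/ltnW le] := leqP (size P1) (size P2).
    exact: Hwlog.
  by case: (Hwlog P2 Q2 P1 Q1 le _ (esym E) n2 n1 a2 b2 a1 b1) => [|-> ->]; rewrite // -E.
move=> g E n1 n2 a1 b1 a2 _; have [[|w W] [E2 E1]] := cat_eq_cat_le E le12.
  by rewrite E2 E1 cats0.
have wP2 : head (Lf 0) Q1 \in P2 by rewrite E1 E2 mem_cat mem_head orbT.
have g' : simple (P2 ++ Q2) by rewrite -E.
by case: (simple_cat_cover g' wP2) => i /b1 /a2.
Qed.

Lemma play_inj t t' R : simple R -> (nodes t).+1 = size R -> (nodes t').+1 = size R ->
  (play t R).1 = (play t' R).1 -> t = t'.
Proof.
elim: t t' R => [|t1 IH1 t2 IH2 t3 IH3] [|t1' t2' t3'] R gR s s' EL //;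
  try by rewrite -s in s'.
have [Yc [Mid [Yd [ER s1 s2 s3]]]] := nodes_Node3_split s.
have [Yc' [Mid' [Yd' [ER' s1' s2' s3']]]] := nodes_Node3_split s'.
have [Ec Ed] : (play t1 Yc).2 = (play t1' Yc').2 /\ (play t3 Yd).2 = (play t3' Yd').2.
  by have := play_arm_unique gR s s' EL; rewrite {1}ER ER' !play_Node3_arm // => -[-> ->].
have gR' : simple (Yc' ++ Mid' ++ Yd') by rewrite -ER'.
rewrite ER in gR.
have [gYc gYd _ _ _] := node_blocks gR; have [gYc' gYd' _ _ _] := node_blocks gR'.
have [cY dY] := node_arms gR s1 s3; have [cY' dY'] := node_arms gR' s1' s3'.
have [EYc EMY] : Yc = Yc' /\ Mid ++ Yd = Mid' ++ Yd'.
  apply: (prefix_cover_unique gR _ _ _ cY); rewrite -?s1 -?s1' -?ER -?ER' //.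
  - by have [] := play_inv gYc s1.
  - by rewrite Ec.
  - by have [] := play_inv gYc' s1'; rewrite Ec.
have [EM EYd] : Mid = Mid' /\ Yd = Yd'.
  have [_ gMY _] := simple_cat gR.
  apply: (suffix_cover_unique gMY EMY _ _ dY); rewrite -?s3 -?s3' //.
  - by have [] := play_inv gYd s3.
  - by rewrite Ed.
  - by have [] := play_inv gYd' s3'; rewrite Ed.
subst Yc' Mid' Yd'; move: EL; rewrite {}ER !play_Node3_cat //= -Ec -Ed => EL.
have e1 : t1 = t1'.
  apply: (IH1 _ _ gYc s1 s1').
  rewrite (@node_labels_c t1 t2 t3 _ _ _ gR) // (@node_labels_c t1' t2' t3' _ _ _ gR) //.
  by rewrite -Ec -Ed EL.
have e3 : t3 = t3'.
  apply: (IH3 _ _ gYd s3 s3').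
  rewrite (@node_labels_d t1 t2 t3 _ _ _ gR) // (@node_labels_d t1' t2' t3' _ _ _ gR) //.
  by rewrite -Ec -Ed EL.
subst t1' t3'; congr Node3.
have [_ _ _ uc _] := play_inv gYc s1; have [_ _ _ ud _] := play_inv gYd s3.
apply: (IH2 _ _ (simple_rcons gR uc ud cY dY)); rewrite ?size_rcons ?s2 ?s2' //.
rewrite (@node_labels_inner t1 t2 t3 _ _ _ gR) // (@node_labels_inner t1 t2' t3 _ _ _ gR) //.
by rewrite EL.
Qed.

Local Close Scope fset_scope.

(** * Counting ternary trees *)

Definition fnodes (f : seq tree3) := sumn (map nodes f).

Definition join3 (f : seq tree3) : seq tree3 :=
  if f is [:: a, b, c & g] then Node3 a b c :: g else f.

(* [forests w m] lists the forests of [r] ternary trees with [m] nodes in all,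
   where [w = 3 m + r]: a nonempty forest starts with a leaf, or with a node
   whose three subtrees replace it in a forest of the same weight [w - 1]. *)
Fixpoint forests (w m : nat) : seq (seq tree3) :=
  if w is w'.+1 then
    if 3 * m <= w' then
      [seq Leaf3 :: f | f <- forests w' m] ++
      (if m is m'.+1 then map join3 (forests w' m') else [::])
    else [::]
  else if m == 0 then [:: [::]] else [::].

Lemma forestsS w m : 3 * m <= w -> forests w.+1 m =
  [seq Leaf3 :: f | f <- forests w m] ++
  (if m is m'.+1 then map join3 (forests w m') else [::]).
Proof. by move=> /= ->. Qed.

Lemma forests_weight w m f : f \in forests w m -> 3 * m + size f = w /\ fnodes f = m.
Proof.
elim: w m f => [|w IH] m f /=.
  by case: (m =P 0) => [->|//]; rewrite inE => /eqP ->.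
case: leqP => // le3m; rewrite mem_cat => /orP[/mapP[g /IH [<- <-] ->] //|].
  by rewrite /= addnS.
case: m le3m => [//|m] le3m /mapP[g /IH [Ew Em] ->].
case: g Ew Em => [|a [|b [|c g]]] /= Ew Em; try lia.
by rewrite /fnodes /= in Em *; split; lia.
Qed.

Lemma forests_complete f : f \in forests (3 * fnodes f + size f) (fnodes f).
Proof.
have [k] := ubnP (3 * fnodes f + size f); elim: k f => // k IH [|[|a b c] g] lt_k //.
  have -> : 3 * fnodes (Leaf3 :: g) + size (Leaf3 :: g) = (3 * fnodes g + size g).+1.
    by rewrite addnS.
  have inj_cons : injective (cons Leaf3) by move=> ? ? [].
  rewrite forestsS ?leq_addr // mem_cat (mem_map inj_cons).
  by rewrite IH //; rewrite addnS in lt_k.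
set h := [:: a, b, c & g].
have Eh : fnodes (Node3 a b c :: g) = (fnodes h).+1 by rewrite /fnodes /=; lia.
have -> : 3 * fnodes (Node3 a b c :: g) + size (Node3 a b c :: g) =
          (3 * fnodes h + size h).+1 by rewrite Eh /=; lia.
rewrite Eh forestsS /=; last lia.
rewrite mem_cat; apply/orP; right.
have sh : size h = (size g).+3 by [].
by apply/mapP; exists h => //; apply: IH; rewrite Eh /= in lt_k; lia.
Qed.

Lemma uniq_forests w m : uniq (forests w m).
Proof.
elim: w m => [|w IH] m /=; first by case: (m == 0).
case: leqP => // le3m; rewrite cat_uniq map_inj_uniq ?IH //; last by move=> ? ? [].
case: m le3m => [|m] le3m //=.
have big f : f \in forests w m -> 2 < size f by move/forests_weight => [Ew _]; lia.
rewrite map_inj_in_uniq ?IH ?andbT; last first.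
  move=> f g /big + /big; case: f => [|a [|b [|c f]]] //; case: g => [|a' [|b' [|c' g]]] //=.
  by move=> _ _ [-> -> -> ->].
apply/hasP => -[_ /mapP[f /big + ->] /mapP[g _]].
by case: f => [|a [|b [|c f]]].
Qed.

Lemma size_forests0 w : size (forests w 0) = 1.
Proof. by elim: w => //= w IH; rewrite cats0 size_map. Qed.

Lemma size_forests m r : size (forests (3 * m + r) m) * (3 * m + r) = r * 'C(3 * m + r, m).
Proof.
have [w Ew] : {w | 3 * m + r = w} by exists (3 * m + r).
elim: w m r Ew => [|w IH] m r Ew; first by have [-> ->] : m = 0 /\ r = 0 by lia.
case: r Ew => [|r] Ew.
  by rewrite addn0 in Ew *; rewrite Ew /=; case: leqP => //; lia.
rewrite addnS forestsS ?leq_addr // size_cat size_map.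
case: m Ew => [|m] Ew.
  by rewrite /= size_forests0 bin0; lia.
have E1 : 3 * m.+1 + r = w by lia.
have E2 : 3 * m + r.+3 = w by lia.
have IHA := IH m.+1 r E1; have IHB := IH m r.+3 E2.
rewrite E1 in IHA *; rewrite E2 in IHB; rewrite size_map binS.
move: IHA IHB; set A := size _; set B := size _; set B1 := 'C(w, m.+1); set B0 := 'C(w, m).
move=> IHA IHB.
(* With [m.+1 * B1 = (w - m) * B0], both sides become multiples of [B0]. *)
have ML : m.+1 * B1 = (2 * m + r.+3) * B0.
  by rewrite /B1 /B0 mul_bin_left; congr (_ * _); lia.
apply/eqP; rewrite -(@eqn_pmul2l (w * m.+1)); last by rewrite -E2; lia.
apply/eqP; transitivity (m.+1 * w.+1 * (A * w + B * w)); first by ring.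
rewrite IHA IHB.
transitivity (w.+1 * (r * (m.+1 * B1) + r.+3 * m.+1 * B0)); first by ring.
transitivity (w * r.+1 * (m.+1 * B1 + m.+1 * B0)); last by ring.
by rewrite ML -E2; ring.
Qed.

Definition trees m : seq tree3 := [seq head Leaf3 f | f <- forests (3 * m + 1) m].

Lemma mem_trees m t : (t \in trees m) = (nodes t == m).
Proof.
apply/mapP/eqP => [[f /forests_weight [sf <-] ->]|<-].
  by case: f sf => [|t' [|]] /= sf; try lia; rewrite /fnodes /= addn0.
by exists [:: t]; rewrite // -[nodes t]addn0; apply: forests_complete.
Qed.

Lemma uniq_trees m : uniq (trees m).
Proof.
rewrite map_inj_in_uniq ?uniq_forests // => f g /forests_weight [sf _] /forests_weight [sg _].
by case: f sf => [|a [|]] /=; try lia; case: g sg => [|b [|]] /=; try lia; move=> _ _ ->.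
Qed.

Lemma size_trees m : size (trees m) * (2 * m).+1 = 'C(3 * m, m).
Proof.
have Ef := size_forests m 1; have Eb := mul_bin_down (3 * m + 1) m.
have E : 3 * m + 1 - m = (2 * m).+1 by lia.
rewrite mul1n in Ef; rewrite E addn1 /= in Eb.
apply/eqP; rewrite -(@eqn_pmul2l (3 * m).+1) //; apply/eqP.
by rewrite Eb -addn1 -Ef /trees size_map; ring.
Qed.

Local Open Scope fset_scope.

(** * Endstates *)

Lemma size_arms n : size (arms n) = n.
Proof. by rewrite size_map size_iota. Qed.

Lemma simple_arms n : simple (arms n).
Proof.
rewrite /simple; suff -> : rleaves (arms n) = iota 1 n by apply: iota_uniq.
by rewrite /arms /rleaves; elim: (iota 1 n) => //= i s ->.
Qed.

Lemma play_labels_notin_arms n t z : (nodes t).+1 = n ->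
  z \in (play t (arms n)).1 -> z \notin lset (arms n).
Proof.
move=> sz zin; rewrite -(size_arms n) in sz.
have [_ _ _ _ /(_ z zin) [u [v [-> _ _ _]]]] := play_inv (simple_arms n) sz.
by rewrite in_lset; apply/mapP => -[].
Qed.

Definition endstate_labels n : seq {fset lab} :=
  [seq lset (arms n) `|` (play t (arms n)).1 | t <- trees n.-1].

Lemma endstate_labelsP n S : 0 < n ->
  S \in endstate_labels n <-> exists s, [/\ reachable n s, is_endstate s & labels s = S].
Proof.
move=> n_gt0; split.
  case/mapP=> t; rewrite mem_trees => /eqP tn ->.
  have sz : (nodes t).+1 = size (arms n) by rewrite size_arms; lia.
  have [N [rs' [HN T EL]]] := collapses_outcome (play_collapses sz).
  exists (State rs' (N ++ arms n)); split.
  - exact: steps_reachable HN (reach_init n).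
  - exact/endstate_terminal.
  - by rewrite /labels -/(lset _) lset_cat EL fsetUC.
case=> s [/reachable_steps [N [HN Hh]] /endstate_terminal T <-].
have HE : outcome [:: arms n] (lset N) by exists N, (regions s).
have [|y /collapses_play [t [sz Ep]]] := outcome_collapses HE; first by rewrite size_arms.
apply/mapP; exists t; first by rewrite mem_trees size_arms in sz *; apply/eqP; lia.
by rewrite Ep /labels -/(lset _) Hh lset_cat fsetUC.
Qed.

Lemma uniq_endstate_labels n : 0 < n -> uniq (endstate_labels n).
Proof.
move=> n_gt0; rewrite map_inj_in_uniq ?uniq_trees // => t t'.
rewrite !mem_trees => /eqP tn /eqP t'n EL.
have sz : (nodes t).+1 = size (arms n) by rewrite size_arms; lia.
have sz' : (nodes t').+1 = size (arms n) by rewrite size_arms; lia.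
apply: (play_inj (simple_arms n) sz sz').
have arms_sep u : nodes u = n.-1 -> (play u (arms n)).1 =
    [fset z in (play u (arms n)).1 `|` lset (arms n) | z \notin lset (arms n)].
  move=> un; apply: fsetU_sep => [z|z -> //]; apply: play_labels_notin_arms; lia.
rewrite (arms_sep t) // (arms_sep t') //.
by rewrite (fsetUC (play t _).1) (fsetUC (play t' _).1) EL.
Qed.

Local Close Scope fset_scope.
Local Open Scope ring_scope.

Theorem theorem2 (n : nat) : (1 <= n)%N ->
  exists E : {fset {fset lab}},
    endstate_classes n E /\
    (#|` E|%:R : rat) = (1 / (2 * n - 1)%:R) * ('C(3 * n - 3, n - 1))%:R.
Proof.
move=> n_gt0; exists [fset S | S in endstate_labels n]%fset; split.
  by move=> S; rewrite inE; apply: endstate_labelsP.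
rewrite card_fseq undup_id ?uniq_endstate_labels // size_map.
case: n n_gt0 => [//|m] _; rewrite mul1r.
have -> : (2 * m.+1 - 1)%N = (2 * m).+1 by lia.
have -> : (3 * m.+1 - 3)%N = (3 * m)%N by lia.
by rewrite subn1 -size_trees natrM mulrC mulfK ?pnatr_eq0.
Qed.
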